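(* Let $\mathbf X=\{X_n\}$ and $\mathbf Y=\{Y_n\}$ be general sources such that $$\inf_{0<\epsilon<1}\ \liminf_{n\to\infty}\ \inf_{0\le\delta<1-\epsilon}\{c_n^x(\delta+\epsilon)-c_n^y(\delta)\}\ \ge 0 .$$ Then there exist joint pmfs $P_{X_nY_n}$ with marginals $P_{X_n}$ and $P_{Y_n}$, for each $n$, such that for every $\gamma>0$ $$\lim_{n\to\infty}P_{X_nY_n}\Big\{\tfrac1n\log\tfrac{1}{P_{X_n}(X_n)}-\tfrac1n\log\tfrac{1}{P_{Y_n}(Y_n)}<-\gamma\Big\}=0 .$$ In other words, $\text{p-}\liminf_{n\to\infty}\{\frac1n\log\frac{1}{P_{X_n}(X_n)}-\frac1n\log\frac{1}{P_{Y_n}(Y_n)}\}\ge0$ under $P_{X_nY_n}$.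
   Context: Logarithms are natural. A general source $\mathbf X=\{X_n\}_{n\ge1}$ is a sequence of random variables, $X_n$ taking values in a countable set $\mathcal X_n$, with no consistency requirements between different $n$. Similarly $Y_n$ takes values in a countable set $\mathcal Y_n$. For a random variable $Z$ on a countable set $\mathcal Z$ with pmf $P_Z$, list the elements of positive probability as $z_1,z_2,\dots$ (a finite or countably infinite list) with $P_Z(z_1)\ge P_Z(z_2)\ge\cdots$ (ties broken arbitrarily). Set $\delta_0=0$ and $\delta_k=\sum_{i\le k}P_Z(z_i)$. For $\delta\in[0,1)$ define $c^z(\delta)=\log\frac{1}{P_Z(z_k)}$, where $k$ is the unique index with $\delta\in[\delta_{k-1},\delta_k)$. Here $c_n^x$ and $c_n^y$ denote this function built from $P_{X_n}$ and from $P_{Y_n}$ respectively. *)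

From Stdlib Require Import Reals Lra Lia ClassicalEpsilon.
Open Scope R_scope.

(* A pmf on a countable set, the set being (w.l.o.g.) encoded into nat. *)
Definition is_pmf (P : nat -> R) : Prop :=
  (forall z, 0 <= P z) /\ infinite_sum P 1.

(* Index domain of a finite (Some m : indices 0..m-1) or infinite (None) list. *)
Definition in_dom (K : option nat) (k : nat) : Prop :=
  match K with None => True | Some m => (k < m)%nat end.

(* e : 0,1,2,... (within dom K) lists exactly the elements of positive
   probability, without repetition, in non-increasing order of probability.
   (e k is the paper's z_{k+1}.) Ties are broken arbitrarily. *)
Definition is_dec_enum (P : nat -> R) (e : nat -> nat) (K : option nat) : Prop :=
  (forall k, in_dom K k -> 0 < P (e k)) /\
  (forall k1 k2, in_dom K k1 -> in_dom K k2 -> e k1 = e k2 -> k1 = k2) /\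
  (forall z, 0 < P z -> exists k, in_dom K k /\ e k = z) /\
  (forall k, in_dom K (S k) -> P (e (S k)) <= P (e k)).

(* psum P e k = delta_k = P(z_1)+...+P(z_k) *)
Fixpoint psum (P : nat -> R) (e : nat -> nat) (k : nat) : R :=
  match k with
  | O => 0
  | S k' => psum P e k' + P (e k')
  end.

(* c(delta) = log (1 / P(z_k)) where delta in [delta_{k-1}, delta_k). *)
Definition cfun (P : nat -> R) (e : nat -> nat) (K : option nat) (delta : R) : R :=
  epsilon (inhabits 0) (fun v => exists k, in_dom K k /\
     psum P e k <= delta < psum P e (S k) /\ v = ln (/ P (e k))).

Definition is_coupling (PX PY : nat -> R) (Q : nat -> nat -> R) : Prop :=
  (forall x y, 0 <= Q x y) /\
  (forall x, infinite_sum (fun y => Q x y) (PX x)) /\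
  (forall y, infinite_sum (fun x => Q x y) (PY y)).

Definition prob_is (Q : nat -> nat -> R) (A : nat -> nat -> Prop)
  (Adec : forall x y, {A x y} + {~ A x y}) (p : R) : Prop :=
  exists r : nat -> R,
    (forall x, infinite_sum (fun y => if Adec x y then Q x y else 0) (r x)) /\
    infinite_sum r p.

From Stdlib Require Import Reals Lra Lia ClassicalEpsilon.
Open Scope R_scope.

(* Partition [0,1) into consecutive intervals [I x] of length
   [PX x], in the order of decreasing probability, and likewise into intervals
   [J y] of length [PY y]; then [cfun] reads [ln (1 / PX x)] off the interval
   containing its argument.  For a shift [eps] in (0,1) couple the sources by
   drawing [U] uniformly, letting [Y] be the label of the [J]-interval of [U]
   and [X] that of the [I]-interval of [U + eps] mod 1.  When [U < 1 - eps]
   the hypothesis bounds [ln (1/PX X) - ln (1/PY Y)] from below, so the gap can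
   only be large on the wrap-around part, which has probability [eps].
   The file develops, in order: nonnegative series and their rearrangement;
   probabilities of events under a joint mass; the cumulative masses of a
   decreasing enumeration; the overlap arithmetic and the interval coupling,
   with its marginals and its violation bound; and a diagonal choice of shifts
   [eps_n -> 0] compatible with the hypothesis, from which the theorem follows. *)

Lemma partial_sum_growing (f : nat -> R) :
  (forall k, 0 <= f k) -> Un_growing (sum_f_R0 f).
Proof. intros Hf n. simpl. specialize (Hf (S n)). lra. Qed.

Lemma partial_sum_le_sum (f : nat -> R) L N :
  (forall k, 0 <= f k) -> infinite_sum f L -> sum_f_R0 f N <= L.
Proof.
  intros Hf HL. apply (growing_ineq (sum_f_R0 f)); [now apply partial_sum_growing | exact HL].
Qed.

Lemma sum_nonneg (f : nat -> R) L :
  (forall k, 0 <= f k) -> infinite_sum f L -> 0 <= L.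
Proof.
  intros Hf HL. apply Rle_trans with (sum_f_R0 f 0); [apply Hf | now apply partial_sum_le_sum].
Qed.

Lemma sum_le (f g : nat -> R) F G :
  (forall k, f k <= g k) -> infinite_sum f F -> infinite_sum g G -> F <= G.
Proof.
  intros Hfg HF HG. eapply Rle_cv_lim; [|exact HF|exact HG].
  intro n. apply sum_Rle. auto.
Qed.

Lemma sum_dominated (f g : nat -> R) G :
  (forall k, 0 <= f k <= g k) -> infinite_sum g G -> exists F, infinite_sum f F.
Proof.
  intros Hfg HG.
  assert (Hg : forall k, 0 <= g k) by (intro k; specialize (Hfg k); lra).
  destruct (Un_cv_crit (sum_f_R0 f)) as [F HF].
  - apply partial_sum_growing; intro k; apply Hfg.
  - exists G. intros r [i ->]. apply Rle_trans with (sum_f_R0 g i).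
    + apply sum_Rle; intros; apply Hfg.
    + now apply partial_sum_le_sum.
  - now exists F.
Qed.

Lemma sum_ext (f g : nat -> R) L :
  (forall k, f k = g k) -> infinite_sum f L -> infinite_sum g L.
Proof.
  intros Hfg HL eps Heps. destruct (HL eps Heps) as [N HN]. exists N. intros n Hn.
  rewrite <- (sum_eq f g n) by auto. now apply HN.
Qed.

Lemma sum_plus (f g : nat -> R) F G :
  infinite_sum f F -> infinite_sum g G -> infinite_sum (fun k => f k + g k) (F + G).
Proof.
  intros HF HG eps Heps.
  destruct (CV_plus (sum_f_R0 f) (sum_f_R0 g) F G HF HG eps Heps) as [N HN].
  exists N. intros n Hn. rewrite plus_sum. now apply HN.
Qed.

(* Two nonnegative series whose partial
   sums dominate each other have the same sum; this applies to a series and its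
   reindexing along an injection that covers the support. *)

Lemma sum_of_cofinal (f g : nat -> R) L :
  (forall z, 0 <= f z) -> (forall k, 0 <= g k) -> infinite_sum g L ->
  (forall N, exists M, sum_f_R0 f N <= sum_f_R0 g M) ->
  (forall M, exists N, sum_f_R0 g M <= sum_f_R0 f N) -> infinite_sum f L.
Proof.
  intros Hf Hg HL Hfg Hgf eps Heps.
  destruct (HL eps Heps) as [M0 HM0]. specialize (HM0 M0 (le_n _)).
  destruct (Hgf M0) as [N0 HN0]. exists N0. intros n Hn.
  destruct (Hfg n) as [M HM].
  assert (sum_f_R0 g M <= L) by now apply partial_sum_le_sum.
  assert (sum_f_R0 f n >= sum_f_R0 f N0)
    by (apply growing_prop; auto; now apply partial_sum_growing).
  unfold R_dist in *. apply Rabs_def2 in HM0. apply Rabs_def1; lra.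
Qed.

Definition drop_term (g : nat -> R) (j : nat) : nat -> R :=
  fun k => if Nat.eqb k j then 0 else g k.

Lemma sum_drop_term g j M :
  (j <= M)%nat -> sum_f_R0 (drop_term g j) M + g j = sum_f_R0 g M.
Proof.
  induction M as [|M IH]; intros Hj.
  - assert (j = 0%nat) by lia. subst. unfold drop_term. simpl. lra.
  - simpl. unfold drop_term at 2. destruct (Nat.eqb_spec (S M) j) as [<-|Hne].
    + rewrite (sum_eq (drop_term g (S M)) g); [lra|].
      intros i Hi. unfold drop_term. destruct (Nat.eqb_spec i (S M)); [lia | auto].
    + rewrite <- IH by lia. lra.
Qed.

Lemma drop_term_nonneg g j : (forall k, 0 <= g k) -> forall k, 0 <= drop_term g j k.
Proof. intros Hg k. unfold drop_term. destruct (Nat.eqb k j); [lra | apply Hg]. Qed.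

Lemma partial_sum_le_inj N : forall (f g : nat -> R) (s : nat -> nat) M,
  (forall z, 0 <= f z) -> (forall k, 0 <= g k) ->
  (forall z, (z <= N)%nat -> 0 < f z -> (s z <= M)%nat /\ g (s z) = f z) ->
  (forall z1 z2, (z1 <= N)%nat -> (z2 <= N)%nat -> 0 < f z1 -> 0 < f z2 ->
     s z1 = s z2 -> z1 = z2) ->
  sum_f_R0 f N <= sum_f_R0 g M.
Proof.
  induction N as [|N IH]; intros f g s M Hf Hg Hs Hinj.
  - simpl. destruct (Rle_lt_or_eq_dec 0 (f 0%nat) (Hf 0%nat)) as [Hp | <-].
    + destruct (Hs 0%nat (le_n _) Hp) as [Hle Hval].
      rewrite <- Hval, <- (sum_drop_term g (s 0%nat) M Hle).
      assert (0 <= sum_f_R0 (drop_term g (s 0%nat)) M)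
        by (apply cond_pos_sum, drop_term_nonneg, Hg). lra.
    + now apply cond_pos_sum.
  - simpl. destruct (Rle_lt_or_eq_dec 0 (f (S N)) (Hf (S N))) as [Hp | <-].
    + destruct (Hs (S N) (le_n _) Hp) as [Hle Hval].
      rewrite <- (sum_drop_term g (s (S N)) M Hle), Hval. apply Rplus_le_compat_r.
      apply (IH f _ s M Hf (drop_term_nonneg g _ Hg)); auto.
      intros z Hz Hfz. destruct (Hs z (le_S _ _ Hz) Hfz) as [Hzle Hzval]. split; auto.
      unfold drop_term. destruct (Nat.eqb_spec (s z) (s (S N))) as [E|E]; auto.
      apply Hinj in E; auto; lia.
    + rewrite Rplus_0_r. apply (IH f g s M); auto.
Qed.

Lemma bounded_on_initial (s : nat -> nat) N : exists M, forall z, (z <= N)%nat -> (s z <= M)%nat.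
Proof.
  induction N as [|N [M HM]].
  - exists (s 0%nat). intros z Hz. replace z with 0%nat by lia. lia.
  - exists (Nat.max M (s (S N))). intros z Hz.
    destruct (Nat.eq_dec z (S N)) as [->|]; [lia|]. specialize (HM z). lia.
Qed.

Definition domb (K : option nat) (k : nat) : bool :=
  match K with None => true | Some m => Nat.ltb k m end.

Lemma domb_iff K k : domb K k = true <-> in_dom K k.
Proof. destruct K; simpl; [apply Nat.ltb_lt | tauto]. Qed.

Definition on_dom (K : option nat) (f : nat -> R) (k : nat) : R :=
  if domb K k then f k else 0.

Lemma sum_reindex (f : nat -> R) (e : nat -> nat) K L :
  (forall z, 0 <= f z) ->
  (forall k1 k2, in_dom K k1 -> in_dom K k2 -> e k1 = e k2 -> k1 = k2) ->
  (forall z, 0 < f z -> exists k, in_dom K k /\ e k = z) ->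
  (infinite_sum f L <-> infinite_sum (on_dom K (fun k => f (e k))) L).
Proof.
  intros Hf Hinj Hsur.
  set (g := on_dom K (fun k => f (e k))).
  assert (Hg : forall k, 0 <= g k) by (intro k; unfold g, on_dom; destruct (domb K k); auto; lra).
  set (index := fun z => epsilon (inhabits 0%nat) (fun k => in_dom K k /\ e k = z)).
  assert (Hindex : forall z, 0 < f z -> in_dom K (index z) /\ e (index z) = z)
    by (intros z Hz; apply epsilon_spec; auto).
  assert (Hfg : forall N, exists M, sum_f_R0 f N <= sum_f_R0 g M).
  { intro N. destruct (bounded_on_initial index N) as [M HM]. exists M.
    apply (partial_sum_le_inj N f g index M Hf Hg).
    - intros z Hz Hfz. split; auto. destruct (Hindex z Hfz) as [D E].
      unfold g, on_dom. apply domb_iff in D. now rewrite D, E.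
    - intros z1 z2 _ _ H1 H2 E.
      now rewrite <- (proj2 (Hindex z1 H1)), <- (proj2 (Hindex z2 H2)), E. }
  assert (Hgf : forall M, exists N, sum_f_R0 g M <= sum_f_R0 f N).
  { intro M. destruct (bounded_on_initial e M) as [N HN]. exists N.
    apply (partial_sum_le_inj M g f e N Hg Hf).
    - intros k Hk Hgk. split; auto. unfold g, on_dom in *. destruct (domb K k); auto; lra.
    - intros k1 k2 _ _ H1 H2 E. unfold g, on_dom in *.
      destruct (domb K k1) eqn:D1; [|lra]. destruct (domb K k2) eqn:D2; [|lra].
      apply Hinj; auto; now apply domb_iff. }
  split; intro H; [apply (sum_of_cofinal g f L) | apply (sum_of_cofinal f g L)]; auto.
Qed.

Definition restrict (Q : nat -> nat -> R) (A : nat -> nat -> Prop)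
  (Adec : forall x y, {A x y} + {~ A x y}) (x y : nat) : R :=
  if Adec x y then Q x y else 0.

Lemma restrict_between Q A Adec x y : 0 <= Q x y -> 0 <= restrict Q A Adec x y <= Q x y.
Proof. intros. unfold restrict. destruct (Adec x y); lra. Qed.

Lemma event_prob_exists (Q : nat -> nat -> R) (PX : nat -> R) T A Adec :
  (forall x y, 0 <= Q x y) -> (forall x, infinite_sum (Q x) (PX x)) -> infinite_sum PX T ->
  exists p, prob_is Q A Adec p.
Proof.
  intros HQ Hrow Htot.
  assert (Hr : forall x, exists r, infinite_sum (restrict Q A Adec x) r)
    by (intro x; exact (sum_dominated _ _ _ (fun y => restrict_between Q A Adec x y (HQ x y)) (Hrow x))).
  destruct (choice _ Hr) as [r Hr'].
  assert (Hr_le : forall x, 0 <= r x <= PX x).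
  { intro x. split.
    - exact (sum_nonneg _ _ (fun y => proj1 (restrict_between Q A Adec x y (HQ x y))) (Hr' x)).
    - exact (sum_le _ _ _ _ (fun y => proj2 (restrict_between Q A Adec x y (HQ x y))) (Hr' x) (Hrow x)). }
  destruct (sum_dominated r PX T Hr_le Htot) as [p Hp].
  now exists p, r.
Qed.

Lemma event_prob_nonneg Q A Adec p :
  (forall x y, 0 <= Q x y) -> prob_is Q A Adec p -> 0 <= p.
Proof.
  intros HQ [r [Hr Hp]]. apply (sum_nonneg r p); auto. intro x.
  exact (sum_nonneg _ _ (fun y => proj1 (restrict_between Q A Adec x y (HQ x y))) (Hr x)).
Qed.

Lemma event_prob_le Q A Adec p (B : nat -> nat -> R) (bx : nat -> R) b :
  (forall x y, 0 <= B x y) -> (forall x y, A x y -> Q x y <= B x y) ->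
  (forall x, infinite_sum (B x) (bx x)) -> infinite_sum bx b ->
  prob_is Q A Adec p -> p <= b.
Proof.
  intros HB HAB Hrow Htot [r [Hr Hp]]. apply (sum_le r bx _ _); auto.
  intro x. eapply sum_le; [|exact (Hr x) | exact (Hrow x)].
  intro y. cbv beta. destruct (Adec x y) as [Hxy|]; [now apply HAB | apply HB].
Qed.

(* Cumulative masses of a decreasing enumeration.  [psum P e k] is the left
   end of the interval [[psum P e k, psum P e (S k))] of length [P (e k)] that
   the k-th most likely outcome occupies in the partition of [0,1). *)

Definition dom_count (K : option nat) (n : nat) : nat :=
  match K with None => n | Some m => Nat.min n m end.

Lemma telescope_on_dom (F : nat -> R) K N :
  sum_f_R0 (on_dom K (fun k => F (S k) - F k)) N = F (dom_count K (S N)) - F 0%nat.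
Proof.
  unfold on_dom. induction N as [|N IH].
  - simpl sum_f_R0. destruct K as [m|]; unfold dom_count, domb; [|lra].
    destruct (Nat.ltb_spec 0 m).
    + replace (Nat.min 1 m) with 1%nat by lia. lra.
    + replace (Nat.min 1 m) with 0%nat by lia. lra.
  - rewrite tech5, IH. destruct K as [m|]; unfold dom_count, domb; [|lra].
    destruct (Nat.ltb_spec (S N) m).
    + replace (Nat.min (S N) m) with (S N) by lia.
      replace (Nat.min (S (S N)) m) with (S (S N)) by lia. lra.
    + replace (Nat.min (S (S N)) m) with (Nat.min (S N) m) by lia. lra.
Qed.

Section CumulativeMass.

Variables (P : nat -> R) (e : nat -> nat) (K : option nat).
Hypothesis HP : is_pmf P.
Hypothesis HE : is_dec_enum P e K.

Lemma psum_monotone k k' : (k <= k')%nat -> psum P e k <= psum P e k'.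
Proof.
  induction 1 as [|k' _ IH]; [lra|]. simpl. pose proof (proj1 HP (e k')). lra.
Qed.

Lemma psum_nonneg k : 0 <= psum P e k.
Proof. apply (psum_monotone 0%nat k). lia. Qed.

Lemma psum_increments k :
  on_dom K (fun k => psum P e (S k) - psum P e k) k = on_dom K (fun k => P (e k)) k.
Proof. unfold on_dom. destruct (domb K k); simpl; lra. Qed.

Lemma enum_total_mass : infinite_sum (on_dom K (fun k => P (e k))) 1.
Proof.
  destruct HP as [H0 H1], HE as [_ [Hinj [Hsur _]]]. now apply (sum_reindex P e K 1).
Qed.

Lemma psum_tends_to_one : Un_cv (fun N => psum P e (dom_count K (S N))) 1.
Proof.
  intros eps Heps. destruct (enum_total_mass eps Heps) as [N HN]. exists N. intros n Hn.
  specialize (HN n Hn).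
  rewrite <- (sum_eq _ _ n (fun k _ => psum_increments k)), telescope_on_dom in HN.
  simpl psum at 2 in HN. now rewrite Rminus_0_r in HN.
Qed.

Lemma psum_le_one k : in_dom K k -> psum P e (S k) <= 1.
Proof.
  intros Hk.
  assert (Hnonneg : forall z, 0 <= on_dom K (fun k => P (e k)) z)
    by (intro z; unfold on_dom; destruct (domb K z); [apply HP | lra]).
  assert (L := partial_sum_le_sum _ 1 k Hnonneg enum_total_mass).
  rewrite <- (sum_eq _ _ k (fun k _ => psum_increments k)), telescope_on_dom in L.
  replace (dom_count K (S k)) with (S k) in L
    by (destruct K; unfold dom_count, in_dom in *; lia).
  simpl psum at 2 in L. lra.
Qed.

Lemma sum_lipschitz_increments (h : R -> R) :
  (forall u v, Rabs (h u - h v) <= Rabs (u - v)) ->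
  infinite_sum (on_dom K (fun k => h (psum P e (S k)) - h (psum P e k))) (h 1 - h 0).
Proof.
  intros Hh eps Heps. destruct (psum_tends_to_one eps Heps) as [N HN].
  exists N. intros n Hn. rewrite (telescope_on_dom (fun k => h (psum P e k))).
  simpl psum at 2. unfold R_dist in *.
  replace (h (psum P e (dom_count K (S n))) - h 0 - (h 1 - h 0))
    with (h (psum P e (dom_count K (S n))) - h 1) by ring.
  eapply Rle_lt_trans; [apply Hh | exact (HN n Hn)].
Qed.

Definition rank (x : nat) : nat :=
  epsilon (inhabits 0%nat) (fun k => in_dom K k /\ e k = x).

Definition start (x : nat) : R := psum P e (rank x).

Lemma rank_spec x : 0 < P x -> in_dom K (rank x) /\ e (rank x) = x.
Proof.
  intros Hx. unfold rank. apply epsilon_spec. now apply (proj1 (proj2 (proj2 HE))).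
Qed.

Lemma start_enum k : in_dom K k -> start (e k) = psum P e k.
Proof.
  intros Hk. unfold start.
  assert (H : in_dom K (rank (e k)) /\ e (rank (e k)) = e k)
    by (unfold rank; apply epsilon_spec; eauto).
  destruct H as [Hdom He]. now rewrite ((proj1 (proj2 HE)) _ _ Hdom Hk He).
Qed.

Lemma start_bounds x : 0 < P x -> 0 <= start x /\ start x + P x <= 1.
Proof.
  intros Hx. destruct (rank_spec x Hx) as [D E]. split; [apply psum_nonneg|].
  pose proof (psum_le_one _ D) as L. simpl in L. unfold start. rewrite E in L. lra.
Qed.

Lemma cfun_on_interval k t : in_dom K k -> psum P e k <= t < psum P e (S k) ->
  cfun P e K t = ln (/ P (e k)).
Proof.
  intros Hk Ht. unfold cfun.
  match goal with |- epsilon ?i ?Spec = _ =>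
    assert (Hspec : Spec (epsilon i Spec)) by (apply epsilon_spec; eauto) end.
  destruct Hspec as [k' [Hk' [Ht' ->]]].
  destruct (Nat.lt_trichotomy k k') as [L|[->|L]]; auto.
  - pose proof (psum_monotone (S k) k' L). lra.
  - pose proof (psum_monotone (S k') k L). lra.
Qed.

End CumulativeMass.

(* Projection onto a segment.  For [c <= d] and [u <= v], the difference
   [clamp c d v - clamp c d u] is the length of [[c,d]] ∩ [[u,v]]. *)
Definition clamp (c d t : R) : R := Rmax c (Rmin t d).

Ltac clamp_cases := unfold clamp, Rmax, Rmin in *; repeat destruct Rle_dec; try lra.

Lemma clamp_lipschitz c d u v : Rabs (clamp c d u - clamp c d v) <= Rabs (u - v).
Proof. unfold Rabs; repeat destruct Rcase_abs; clamp_cases. Qed.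

Lemma clamp_monotone c d u v : u <= v -> clamp c d u <= clamp c d v.
Proof. intros. clamp_cases. Qed.

Lemma clamp_degenerate c t : clamp c c t = c.
Proof. clamp_cases. Qed.

Lemma overlap_symmetric c d u v : u <= v -> c <= d ->
  clamp c d v - clamp c d u = clamp u v d - clamp u v c.
Proof. intros. clamp_cases. Qed.

Lemma overlap_pos c d u v : u <= v -> c <= d -> 0 < clamp c d v - clamp c d u ->
  Rmax u c < Rmin v d.
Proof. intros. clamp_cases. Qed.

Lemma two_shifts_cover_segment a p eps : 0 < eps < 1 -> 0 <= p ->
  (p = 0 \/ (0 <= a /\ a + p <= 1)) ->
  clamp (a + - eps) (a + p + - eps) 1 - clamp (a + - eps) (a + p + - eps) 0 +
  (clamp (a + (1 - eps)) (a + p + (1 - eps)) 1 - clamp (a + (1 - eps)) (a + p + (1 - eps)) 0) = p.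
Proof. intros ? ? [?|[? ?]]; clamp_cases. Qed.

Lemma two_windows_cover_segment c q eps : 0 < eps < 1 -> 0 <= q ->
  (q = 0 \/ (0 <= c /\ c + q <= 1)) ->
  clamp c (c + q) (1 + - eps) - clamp c (c + q) (0 + - eps) +
  (clamp c (c + q) (1 + (1 - eps)) - clamp c (c + q) (0 + (1 - eps))) = q.
Proof. intros ? ? [?|[? ?]]; clamp_cases. Qed.

Lemma wrapped_part a p eps : 0 < eps < 1 -> 0 <= a -> 0 <= p -> a + p <= 1 ->
  clamp (a + (1 - eps)) (a + p + (1 - eps)) 1 - clamp (a + (1 - eps)) (a + p + (1 - eps)) 0
  = clamp (eps - 1) eps (a + p) - clamp (eps - 1) eps a.
Proof. intros; clamp_cases. Qed.

Lemma window_length eps : 0 < eps < 1 -> clamp (eps - 1) eps 1 - clamp (eps - 1) eps 0 = eps.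
Proof. intros; clamp_cases. Qed.

Definition cfun_gap_bounded (PX : nat -> R) (eX : nat -> nat) (KX : option nat)
  (PY : nat -> R) (eY : nat -> nat) (KY : option nat) (eps eta : R) : Prop :=
  forall delta, 0 <= delta < 1 - eps ->
    cfun PX eX KX (delta + eps) - cfun PY eY KY delta >= - eta.

(* Partition [0,1) into intervals [I x] of length [PX x] and
   [J y] of length [PY y], each in decreasing order of probability.  Drawing
   [U] uniformly, [Y] is the label of [J] containing [U] and [X] the label of
   [I] containing [U + eps] (mod 1).  The pair (x, y) then has probability
   |(I x - eps) ∩ J y| + |(I x + 1 - eps) ∩ J y|.  On the first part [U + eps]
   and [U] are compared by the hypothesis; the second part has mass [eps]. *)
Section IntervalCoupling.

Variables (PX PY : nat -> R) (eX eY : nat -> nat) (KX KY : option nat).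
Hypothesis HPX : is_pmf PX.
Hypothesis HEX : is_dec_enum PX eX KX.
Hypothesis HPY : is_pmf PY.
Hypothesis HEY : is_dec_enum PY eY KY.

(* Length of (I x + s) ∩ J y. *)
Definition piece (s : R) (x y : nat) : R :=
  clamp (start PX eX KX x + s) (start PX eX KX x + PX x + s) (start PY eY KY y + PY y)
  - clamp (start PX eX KX x + s) (start PX eX KX x + PX x + s) (start PY eY KY y).

Lemma piece_nonneg s x y : 0 <= piece s x y.
Proof.
  unfold piece. pose proof (proj1 HPY y).
  pose proof (clamp_monotone (start PX eX KX x + s) (start PX eX KX x + PX x + s)
    (start PY eY KY y) (start PY eY KY y + PY y)). lra.
Qed.

Lemma piece_pos_x s x y : 0 < piece s x y -> 0 < PX x.
Proof.
  intros Hpiece. destruct (Rle_lt_or_eq_dec _ _ (proj1 HPX x)) as [|E]; auto.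
  unfold piece in Hpiece. rewrite <- E, Rplus_0_r, !clamp_degenerate in Hpiece. lra.
Qed.

Lemma piece_pos_y s x y : 0 < piece s x y -> 0 < PY y.
Proof.
  intros Hpiece. destruct (Rle_lt_or_eq_dec _ _ (proj1 HPY y)) as [|E]; auto.
  unfold piece in Hpiece. rewrite <- E, Rplus_0_r in Hpiece. lra.
Qed.

Lemma piece_row_sum s x :
  infinite_sum (fun y => piece s x y)
    (clamp (start PX eX KX x + s) (start PX eX KX x + PX x + s) 1
     - clamp (start PX eX KX x + s) (start PX eX KX x + PX x + s) 0).
Proof.
  apply (sum_reindex _ eY KY).
  - intro; apply piece_nonneg.
  - apply HEY.
  - intros y Hy. apply HEY. eapply piece_pos_y; eauto.
  - eapply sum_ext; [|exact (sum_lipschitz_increments PY eY KY HPY HEY _ (clamp_lipschitz _ _))].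
    intro k. unfold on_dom. destruct (domb KY k) eqn:D; auto.
    apply domb_iff in D. unfold piece. now rewrite (start_enum PY eY KY HEY k D).
Qed.

Lemma piece_col_sum s y :
  infinite_sum (fun x => piece s x y)
    (clamp (start PY eY KY y) (start PY eY KY y + PY y) (1 + s)
     - clamp (start PY eY KY y) (start PY eY KY y + PY y) (0 + s)).
Proof.
  apply (sum_reindex _ eX KX).
  - intro; apply piece_nonneg.
  - apply HEX.
  - intros x Hx. apply HEX. eapply piece_pos_x; eauto.
  - set (h := fun t => clamp (start PY eY KY y) (start PY eY KY y + PY y) (t + s)).
    assert (Hh : forall u v, Rabs (h u - h v) <= Rabs (u - v)).
    { intros u v. replace (u - v) with ((u + s) - (v + s)) by ring. apply clamp_lipschitz. }
    eapply sum_ext; [|exact (sum_lipschitz_increments PX eX KX HPX HEX h Hh)].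
    intro k. unfold on_dom, h. destruct (domb KX k) eqn:D; auto.
    apply domb_iff in D. unfold piece. rewrite (start_enum PX eX KX HEX k D).
    pose proof (proj1 HPY y). pose proof (proj1 HPX (eX k)).
    apply overlap_symmetric; lra.
Qed.

Definition coupling (eps : R) (x y : nat) : R := piece (- eps) x y + piece (1 - eps) x y.

Lemma coupling_is_coupling eps : 0 < eps < 1 -> is_coupling PX PY (coupling eps).
Proof.
  intros Heps. split; [|split].
  - intros x y. unfold coupling. pose proof (piece_nonneg (- eps) x y).
    pose proof (piece_nonneg (1 - eps) x y). lra.
  - intro x. rewrite <- (two_shifts_cover_segment (start PX eX KX x) (PX x) eps Heps (proj1 HPX x)).
    + apply sum_plus; apply piece_row_sum.
    + destruct (Rle_lt_or_eq_dec _ _ (proj1 HPX x)) as [H|H]; [right | now left].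
      now apply start_bounds.
  - intro y. rewrite <- (two_windows_cover_segment (start PY eY KY y) (PY y) eps Heps (proj1 HPY y)).
    + apply sum_plus; apply piece_col_sum.
    + destruct (Rle_lt_or_eq_dec _ _ (proj1 HPY y)) as [H|H]; [right | now left].
      now apply start_bounds.
Qed.

Definition wrap_mass (eps : R) (x : nat) : R :=
  clamp (start PX eX KX x + (1 - eps)) (start PX eX KX x + PX x + (1 - eps)) 1
  - clamp (start PX eX KX x + (1 - eps)) (start PX eX KX x + PX x + (1 - eps)) 0.

Lemma wrap_mass_sum eps : 0 < eps < 1 -> infinite_sum (wrap_mass eps) eps.
Proof.
  intros Heps. apply (sum_reindex _ eX KX).
  - intro x. unfold wrap_mass.
    pose proof (clamp_monotone (start PX eX KX x + (1 - eps))
      (start PX eX KX x + PX x + (1 - eps)) 0 1). lra.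
  - apply HEX.
  - intros x Hx. apply HEX. destruct (Rle_lt_or_eq_dec _ _ (proj1 HPX x)) as [|E]; auto.
    unfold wrap_mass in Hx. rewrite <- E, Rplus_0_r, !clamp_degenerate in Hx. lra.
  - pose proof (sum_lipschitz_increments PX eX KX HPX HEX _ (clamp_lipschitz (eps - 1) eps)) as T.
    rewrite (window_length eps Heps) in T.
    eapply sum_ext; [|exact T].
    intro k. unfold on_dom. destruct (domb KX k) eqn:D; auto.
    apply domb_iff in D. unfold wrap_mass. rewrite (start_enum PX eX KX HEX k D).
    symmetry. apply wrapped_part; auto.
    + apply psum_nonneg, HPX.
    + apply HPX.
    + exact (psum_le_one PX eX KX HPX HEX k D).
Qed.

(* On the support of the first part, [X] is read at [U + eps] and [Y] at [U]
   with [U < 1 - eps], so the hypothesis bounds the self-information gap. *)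
Lemma principal_piece_gap eps eta x y : 0 < eps < 1 ->
  cfun_gap_bounded PX eX KX PY eY KY eps eta ->
  0 < piece (- eps) x y -> ln (/ PX x) - ln (/ PY y) >= - eta.
Proof.
  intros Heps Hgap Hpiece.
  pose proof (piece_pos_x _ _ _ Hpiece) as Hx. pose proof (piece_pos_y _ _ _ Hpiece) as Hy.
  destruct (rank_spec PX eX KX HEX x Hx) as [Dx Ex].
  destruct (rank_spec PY eY KY HEY y Hy) as [Dy Ey].
  destruct (start_bounds PX eX KX HPX HEX x Hx) as [Bx1 Bx2].
  destruct (start_bounds PY eY KY HPY HEY y Hy) as [By1 By2].
  unfold piece in Hpiece. apply overlap_pos in Hpiece; [|lra|lra].
  set (a := start PX eX KX x) in *. set (c := start PY eY KY y) in *.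
  set (u := Rmax c (a + - eps)) in *.
  assert (c <= u) by apply Rmax_l. assert (a + - eps <= u) by apply Rmax_r.
  assert (u < c + PY y) by (eapply Rlt_le_trans; [exact Hpiece | apply Rmin_l]).
  assert (u < a + PX x + - eps) by (eapply Rlt_le_trans; [exact Hpiece | apply Rmin_r]).
  assert (EX : cfun PX eX KX (u + eps) = ln (/ PX x)).
  { rewrite <- Ex. apply cfun_on_interval; auto. simpl. rewrite Ex. unfold a, start in *. lra. }
  assert (EY : cfun PY eY KY u = ln (/ PY y)).
  { rewrite <- Ey. apply cfun_on_interval; auto. simpl. rewrite Ey. unfold c, start in *. lra. }
  rewrite <- EX, <- EY. apply Hgap. lra.
Qed.

Lemma coupling_on_gap_violations eps eta x y : 0 < eps < 1 ->
  cfun_gap_bounded PX eX KX PY eY KY eps eta ->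
  ln (/ PX x) - ln (/ PY y) < - eta -> coupling eps x y <= piece (1 - eps) x y.
Proof.
  intros Heps Hgap Hviol. unfold coupling.
  destruct (Rle_lt_or_eq_dec _ _ (piece_nonneg (- eps) x y)) as [Hpos | <-]; [|lra].
  pose proof (principal_piece_gap eps eta x y Heps Hgap Hpos). lra.
Qed.

Lemma coupling_violation_prob eps eta A Adec p : 0 < eps < 1 ->
  cfun_gap_bounded PX eX KX PY eY KY eps eta ->
  (forall x y, A x y -> ln (/ PX x) - ln (/ PY y) < - eta) ->
  prob_is (coupling eps) A Adec p -> p <= eps.
Proof.
  intros Heps Hgap HA. apply (event_prob_le _ _ _ _ (piece (1 - eps)) (wrap_mass eps)).
  - apply piece_nonneg.
  - intros x y Hxy. exact (coupling_on_gap_violations eps eta x y Heps Hgap (HA x y Hxy)).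
  - apply piece_row_sum.
  - now apply wrap_mass_sum.
Qed.

End IntervalCoupling.

Definition eps_seq (m : nat) : R := / INR (m + 2).

Lemma eps_seq_bounds m : 0 < eps_seq m < 1.
Proof.
  unfold eps_seq. assert (H : 1 < INR (m + 2))
    by (rewrite plus_INR; simpl; pose proof (pos_INR m); lra).
  split; [apply Rinv_0_lt_compat; lra|].
  rewrite <- Rinv_1. apply Rinv_lt_contravar; lra.
Qed.

Lemma eps_seq_antitone m m' : (m <= m')%nat -> eps_seq m' <= eps_seq m.
Proof.
  intros H. unfold eps_seq. apply Rinv_le_contravar; [|apply le_INR; lia].
  rewrite plus_INR; simpl; pose proof (pos_INR m); lra.
Qed.

Lemma eps_seq_small e0 : 0 < e0 -> exists M, eps_seq M < e0.
Proof.
  intros H. destruct (INR_archimed e0 1 H) as [M HM]. exists M.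
  unfold eps_seq. pose proof (pos_INR M).
  assert (INR M < INR (M + 2)) by (apply lt_INR; lia).
  apply Rmult_lt_reg_l with (INR (M + 2)); [lra|]. rewrite Rinv_r by lra. nra.
Qed.

Fixpoint last_good (G : nat -> Prop) (k : nat) : nat :=
  match k with
  | O => O
  | S k' => if excluded_middle_informative (G (S k')) then S k' else last_good G k'
  end.

Lemma last_good_spec G k j : (j <= k)%nat -> G j -> (j <= last_good G k)%nat /\ G (last_good G k).
Proof.
  induction k as [|k IH]; intros Hj Gj.
  - simpl. replace j with 0%nat in * by lia. auto.
  - simpl. destruct (excluded_middle_informative (G (S k))) as [g|g]; [split; auto|].
    destruct (Nat.eq_dec j (S k)) as [->|]; [contradiction | apply IH; auto; lia].
Qed.

Lemma diagonal_selection (G : nat -> nat -> Prop) :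
  exists b : nat -> nat, forall M N, (forall n, (N <= n)%nat -> G n M) ->
    forall n, (M <= n)%nat -> (N <= n)%nat -> (M <= b n)%nat /\ G n (b n).
Proof.
  exists (fun n => last_good (G n) n). intros M N HG n HM HN.
  apply last_good_spec; auto.
Qed.

Lemma unscaled_gap (n : nat) (gamma A B : R) : 1 < INR n * gamma ->
  / INR n * A - / INR n * B < - gamma -> A - B < - 1.
Proof.
  intros Hn Hgap. assert (Hpos : 0 < INR n).
  { destruct (Rle_lt_or_eq_dec _ _ (pos_INR n)) as [|E]; auto. rewrite <- E in Hn. lra. }
  replace (A - B) with (INR n * (/ INR n * A - / INR n * B)) by (field; lra).
  apply Rlt_le_trans with (INR n * - gamma); [now apply Rmult_lt_compat_l | lra].
Qed.

Definition rate_gap_event (PX PY : nat -> nat -> R) (gamma : R) (n x y : nat) : Prop :=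
  / INR n * ln (/ PX n x) - / INR n * ln (/ PY n y) < - gamma.

Definition rate_gap_dec (PX PY : nat -> nat -> R) (gamma : R) (n x y : nat) :
  {rate_gap_event PX PY gamma n x y} + {~ rate_gap_event PX PY gamma n x y} :=
  Rlt_dec (/ INR n * ln (/ PX n x) - / INR n * ln (/ PY n y)) (- gamma).

(* At blocklength [n] use the interval coupling with shift
   [eps_seq (b n)], where [b n] is the diagonal selection of indices [m] for
   which the gap hypothesis holds with tolerance 1.  Once [n gamma > 1], the
   event of the theorem only charges the wrap-around part, of mass at most
   [eps_seq (b n)], and [b n] eventually exceeds every [M]. *)
Theorem theorem3
  (PX PY : nat -> nat -> R)
  (eX eY : nat -> nat -> nat) (KX KY : nat -> option nat)
  (hPX : forall n, is_pmf (PX n)) (hPY : forall n, is_pmf (PY n))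
  (heX : forall n, is_dec_enum (PX n) (eX n) (KX n))
  (heY : forall n, is_dec_enum (PY n) (eY n) (KY n))
  (hyp : forall eps, 0 < eps < 1 -> forall eta, 0 < eta ->
     exists N : nat, forall n : nat, (N <= n)%nat ->
       forall delta, 0 <= delta < 1 - eps ->
         cfun (PX n) (eX n) (KX n) (delta + eps)
           - cfun (PY n) (eY n) (KY n) delta >= - eta) :
  exists Q : nat -> nat -> nat -> R,
    (forall n, is_coupling (PX n) (PY n) (Q n)) /\
    forall gamma, 0 < gamma ->
      exists p : nat -> R,
        (forall n, prob_is (Q n)
           (fun x y => / INR n * ln (/ PX n x) - / INR n * ln (/ PY n y) < - gamma)
           (fun x y => Rlt_dec (/ INR n * ln (/ PX n x) - / INR n * ln (/ PY n y)) (- gamma))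
           (p n)) /\
        Un_cv p 0.
Proof.
  destruct (diagonal_selection (fun n m =>
    cfun_gap_bounded (PX n) (eX n) (KX n) (PY n) (eY n) (KY n) (eps_seq m) 1)) as [b Hb].
  set (Q := fun n => coupling (PX n) (PY n) (eX n) (eY n) (KX n) (KY n) (eps_seq (b n))).
  assert (HQ : forall n, is_coupling (PX n) (PY n) (Q n))
    by (intro n; apply coupling_is_coupling; auto; apply eps_seq_bounds).
  exists Q. split; auto. intros gamma Hgamma.
  destruct (choice _ (fun n => event_prob_exists (Q n) (PX n) 1
    (rate_gap_event PX PY gamma n) (rate_gap_dec PX PY gamma n)
    (proj1 (HQ n)) (proj1 (proj2 (HQ n))) (proj2 (hPX n)))) as [p Hp].
  exists p. split; [exact Hp|]. intros e0 He0.
  destruct (eps_seq_small e0 He0) as [M HM].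
  destruct (hyp (eps_seq M) (eps_seq_bounds M) 1 Rlt_0_1) as [N1 HN1].
  destruct (INR_archimed gamma 1 Hgamma) as [N2 HN2].
  exists (Nat.max M (Nat.max N1 N2)). intros n Hn.
  destruct (Hb M N1 HN1 n) as [HbM Hgap]; [lia | lia |].
  assert (Hng : 1 < INR n * gamma)
    by (assert (INR N2 <= INR n) by (apply le_INR; lia); nra).
  assert (Hpn : p n <= eps_seq (b n))
    by exact (coupling_violation_prob _ _ _ _ _ _ (hPX n) (heX n) (hPY n) (heY n) _ 1
      (rate_gap_event PX PY gamma n) (rate_gap_dec PX PY gamma n) (p n) (eps_seq_bounds _) Hgap
      (fun x y => unscaled_gap n gamma _ _ Hng) (Hp n)).
  pose proof (event_prob_nonneg _ _ _ _ (proj1 (HQ n)) (Hp n)).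
  pose proof (eps_seq_antitone M (b n) HbM).
  unfold R_dist. rewrite Rminus_0_r, Rabs_pos_eq; lra.
Qed.
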